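(* Let $\alpha\in(\pi/8,3\pi/8)$ with $\alpha/\pi\notin\mathbb{Q}$, $\beta=\alpha-\pi/2$, $\rho=0.01$, $A_1=\rho R(\alpha)$, $A_2=\rho R(\beta)$ where $R(\theta)=\begin{bmatrix}\cos\theta&-\sin\theta\\ \sin\theta&\cos\theta\end{bmatrix}$, and $c(x)=x_1^2+2x_2^2$ for $x=[x_1,x_2]^\top\in\mathbb{R}^2$. Then the worst-case value function $J^\circ$ of $\{A_1,A_2\}$ with cost $c$ is non-differentiable on a dense subset of $\mathbb{R}^2$.
   Context: For the switched linear system $\xi(t+1)=A_{\sigma(t)}\xi(t)$ with switching signal $\sigma:\mathbb{N}\to\{1,2\}$, $\xi(t,x,\sigma)$ denotes the solution with $\xi(0)=x$, and $J^\circ(x)=\sup_\sigma\sum_{t=0}^\infty c(\xi(t,x,\sigma))$. *)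

From HB Require Import structures.
From mathcomp Require Import all_boot all_order all_algebra.
From mathcomp Require Import all_classical all_reals all_analysis.
Set Implicit Arguments. Unset Strict Implicit. Unset Printing Implicit Defensive.
Import Order.TTheory GRing.Theory Num.Theory.
Import numFieldNormedType.Exports.
Local Open Scope classical_set_scope.
Local Open Scope ring_scope.

Definition rot (R : realType) (th : R) : 'M[R]_2 :=
  \matrix_(i < 2, j < 2)
    if (i == 0 :> nat) && (j == 0 :> nat) then cos th
    else if (i == 0 :> nat) then - sin th
    else if (j == 0 :> nat) then sin th
    else cos th.

(* Solution xi(t, x, sigma) of xi(t+1) = A_{sigma(t)} xi(t), xi(0) = x.
   Modes {1,2} are indexed by 'I_2 = {0,1}. *)
Fixpoint traj (R : realType) (A : 'I_2 -> 'M[R]_2) (sigma : nat -> 'I_2)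
  (x : 'cV[R]_2) (t : nat) : 'cV[R]_2 :=
  match t with
  | 0 => x
  | t'.+1 => A (sigma t') *m traj A sigma x t'
  end.

Definition Jworst (R : realType) (A : 'I_2 -> 'M[R]_2) (c : 'cV[R]_2 -> R)
  (x : 'cV[R]_2) : R :=
  sup [set v | exists sigma : nat -> 'I_2,
         v = limn (fun n => \sum_(0 <= t < n) c (traj A sigma x t))].

Definition cost (R : realType) (x : 'cV[R]_2) : R :=
  x 0 0 ^+ 2 + 2 * x 1 0 ^+ 2.

Definition Apair (R : realType) (alpha : R) : 'I_2 -> 'M[R]_2 :=
  fun i => if i == 0 then (1 / 100 : R) *: rot alpha
           else (1 / 100 : R) *: rot (alpha - pi / 2).

From Pilot Require Import Defs.
From HB Require Import structures.
From mathcomp Require Import all_boot all_order all_algebra.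
From mathcomp Require Import all_classical all_reals all_analysis.
From mathcomp Require Import ring lra.
Set Implicit Arguments. Unset Strict Implicit. Unset Printing Implicit Defensive.
Import Order.TTheory GRing.Theory Num.Theory.
Import numFieldNormedType.Exports.
Local Open Scope classical_set_scope.
Local Open Scope ring_scope.

(* Since A_1 = rho R(alpha) and A_2 = rho R(alpha) R(-pi/2), after t steps the state
   is rho^t R(-k pi/2) R(t alpha) x, where k counts the steps spent in mode 2.  The
   cost c only sees the parity of k, which is even at t = 0 and can be chosen freely
   at every t >= 1, so
     J(x) = c(x) + sum_(t >= 1) rho^(2t) m(R(t alpha) x),
     m(y) = max (y1^2 + 2 y2^2) (2 y1^2 + y2^2).
   Every term is convex and m has a kink along the diagonals |y1| = |y2|, so the
   second difference of J at x in the direction of rotation grows linearly as soon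
   as x <> 0 and R(t alpha) x is diagonal for some t >= 1: J is not differentiable
   there.  Since alpha/pi is irrational the angles t alpha are dense modulo 2 pi
   (Kronecker), so a rotation by an arbitrarily small angle moves any point of the
   plane to such an x. *)

(* Without it, [rot] would denote [seq.rot]. *)
Local Notation rot := Defs.rot.

Lemma periodicz (U V : zmodType) (f : U -> V) (T : U) :
  periodic f T -> forall (k : int) a, f (a + T *~ k) = f a.
Proof.
move=> fT [] n a; first exact: periodicn.
by rewrite NegzE mulrNz -[in RHS](subrK (T *+ n.+1) a) periodicn.
Qed.

Lemma series_ge_term (R : realType) (u : R ^nat) t :
  (forall n, 0 <= u n) -> cvgn (series u) -> u t <= limn (series u).
Proof.
move=> u0 cu; apply: le_trans (nondecreasing_cvgn_le _ cu t.+1).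
  by rewrite seriesSr lerDr sumr_ge0.
exact: nondecreasing_series.
Qed.

Lemma not_differentiable_of_kink (R : realType) (V : normedModType R) (f : V -> R) x v K :
  0 < K -> (forall h, K * `|h| <= f (x + h *: v) + f (x - h *: v) - 2 * f x) ->
  ~ differentiable f x.
Proof.
move=> K0 kink df.
(* The symmetric difference quotient tends to ['d f x v + 'd f x (- v) = 0]. *)
have slope w : (fun h : R => h^-1 *: ((f \o shift x) (h *: w) - f x)) @ 0^' --> 'd f x w.
  by rewrite -(deriveE w df); exact: (diff_derivable (v := w) df).
have := cvgD (slope v) (slope (- v)); rewrite linearN addrN.
move=> /(_ (dnbhs_filter 0)) /cvgrPdist_lt /(_ K K0) near0.
near (0 : R)^' => h.
have h0 : h != 0 by near: h; exact: nbhs_dnbhs_neq.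
have : `|0 - (h^-1 *: ((f \o shift x) (h *: v) - f x) +
             h^-1 *: ((f \o shift x) (h *: - v) - f x))| < K.
  by near: h.
rewrite !fctE sub0r normrN -scalerDr scalerN /shift !(addrC _ x) normrZ normfV.
rewrite ltr_pdivrMl ?normr_gt0 // mulrC; apply/negP; rewrite -leNgt.
have := ler_norm (f (x + h *: v) - f x + (f (x - h *: v) - f x)).
by have := kink h; lra.
Unshelve. all: by end_near.
Qed.

Lemma dense_subset (T : topologicalType) (A B : set T) : A `<=` B -> dense A -> dense B.
Proof.
move=> AB dA O O0 oO; have [x [Ox Ax]] := dA O O0 oO.
by exists x; split; [exact: Ox | exact: AB].
Qed.

Lemma dense_set1C_normed (R : realFieldType) (V : normedModType R) (v p : V) :
  v != 0 -> dense (~` [set p]).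
Proof.
move=> v0 U [z Uz] oU.
have [zp|zp] := eqVneq z p; last by exists z; split=> //; exact/eqP.
pose g r := p + r *: v.
have g_cont : continuous g.
  by move=> r; apply: cvgD; [exact: cvg_cst | apply: cvgZr_tmp; exact: cvg_id].
have [r [Ugr r0]] : (g @^-1` U) `&` ~` [set 0] !=set0.
  apply: dense_set1C; first by exists 0; rewrite /g /= scale0r addr0 -zp.
  exact: open_comp.
exists (g r); split=> //; rewrite /g => /eqP.
by rewrite addrC -subr_eq0 addrK scaler_eq0 (negPf v0) orbF => /eqP.
Qed.

Lemma open_set1C (R : numFieldType) (V : normedModType R) (p : V) : open (~` [set p]).
Proof. by rewrite openC; exact/accessible_closed_set1/hausdorff_accessible/norm_hausdorff. Qed.

(** * Kronecker's theorem *)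

Section kronecker.
Variable R : realType.
Implicit Types a c d e p : R.

Definition fract (y : R) := y - (Num.floor y)%:~R.

Lemma fract_itv y : 0 <= fract y < 1.
Proof.
have := floor_itv y; rewrite intrD mulr1z /fract => /andP [h1 h2].
by apply/andP; split; lra.
Qed.

Lemma exists_multiple_near_integer a d : irrational a -> 0 < d ->
  exists t : nat, (0 < t)%N /\ exists m : int, 0 < `|t%:R * a - m%:~R| < d.
Proof.
move=> irr d0; pose n := (Num.truncn d^-1).+1.
have n_gt0 : 0 < n%:R :> R by rewrite ltr0n.
have nd : 1 < n%:R * d by rewrite -ltr_pdivrMr // div1r truncnS_gt.
(* Pigeonhole: two of the n + 1 numbers [fract (i a)], [i <= n], lie in the same
   interval [[b / n, (b + 1) / n)]. *)
pose box i := Num.truncn (n%:R * fract (i%:R * a)).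
have box_itv i : (box i)%:R <= n%:R * fract (i%:R * a) < (box i).+1%:R.
  by apply: truncn_itv; rewrite mulr_ge0 ?(ltW n_gt0) ?(andP (fract_itv _)).1.
have box_lt i : (box i < n)%N.
  rewrite -(ltr_nat R); apply: le_lt_trans (andP (box_itv i)).1 _.
  by rewrite gtr_pMr ?(andP (fract_itv _)).2.
suff [i [j [ij bij]]] : exists i j, (i < j)%N /\ box i = box j.
  exists (j - i)%N; split; first by rewrite subn_gt0.
  pose m := Num.floor (j%:R * a) - Num.floor (i%:R * a); exists m.
  have -> : (j - i)%:R * a - m%:~R = fract (j%:R * a) - fract (i%:R * a).
    by rewrite natrB ?(ltnW ij) // intrB /fract; ring.
  apply/andP; split.
    rewrite normr_gt0 subr_eq0; apply: contra_notN irr => /eqP fij.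
    have ji0 : (j - i)%:R != 0 :> R by rewrite pnatr_eq0 subn_eq0 -ltnNge.
    have E : (j - i)%:R * a = m%:~R.
      by move: fij; rewrite natrB ?(ltnW ij) // intrB /fract; lra.
    exists (m%:~R / (j - i)%:R) => //.
    by rewrite fmorph_div rmorph_int rmorph_nat -E mulrC mulKf.
  rewrite -(ltr_pM2l n_gt0); apply: lt_trans nd.
  rewrite -[n%:R]ger0_norm ?ler0n // -normrM mulrBr ltr_norml.
  move: (box_itv i) (box_itv j); rewrite bij -natr1.
  set u := n%:R * _; set v := n%:R * _; set b := (box j)%:R.
  by move=> /andP[? ?] /andP[? ?]; apply/andP; split; lra.
pose f (i : 'I_n.+1) : 'I_n := inord (box i).
have /injectivePn [i [j ij fij]] : ~~ injectiveb f.
  by apply/injectiveP => /leq_card; rewrite !card_ord ltnn.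
have {fij} bij : box i = box j.
  by move/(congr1 val): fij; rewrite /= !inordK ?prednK ?box_lt.
case: (ltngtP i j) => [lt_ij|lt_ji|eq_ij]; first by exists i, j.
  by exists j, i.
by move/val_inj: eq_ij ij => ->; rewrite eqxx.
Qed.

Lemma multiples_approx_mod1_of_small e c : 0 < `|e| < 1 ->
  exists k : nat, (0 < k)%N /\ exists n : int, `|k%:R * e - c - n%:~R| < `|e|.
Proof.
wlog e_gt0 : e c / 0 < e.
  move=> base; have [e_gt0|e_le0] := ltrP 0 e; first exact: base.
  move=> e_itv; have e_lt0 : e < 0.
    by rewrite lt_neqAle e_le0 andbT -normr_gt0; case/andP: e_itv.
  have := base (- e) (- c); rewrite oppr_gt0 normrN => /(_ e_lt0 e_itv) [k [k0 [n kn]]].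
  exists k; split=> //; exists (- n); rewrite -normrN.
  suff -> : - (k%:R * e - c - (- n)%:~R) = k%:R * - e - - c - n%:~R by [].
  by rewrite intrN; ring.
rewrite gtr0_norm // => /andP[_ e1].
pose c' := fract c + 1; pose k := Num.truncn (c' / e).
have c'e1 : 1 <= c' / e.
  by rewrite ler_pdivlMr // mul1r /c'; case/andP: (fract_itv c) => ? _; lra.
have /andP[ke1 ke2] := truncn_itv (le_trans ler01 c'e1).
exists k; split; first by rewrite truncn_gt0.
exists (1 - Num.floor c).
rewrite ler_pdivlMr // in ke1; rewrite ltr_pdivrMr // -natr1 in ke2.
by rewrite ltr_norml intrB; apply/andP; split; rewrite /c' /fract in ke1 ke2; lra.
Qed.

Lemma multiples_approx_mod1 a c d : irrational a -> 0 < d ->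
  exists t : nat, (0 < t)%N /\ exists k : int, `|t%:R * a - c - k%:~R| < d.
Proof.
move=> irr d0; have d1 : 0 < Num.min d 1 by rewrite lt_min d0 ltr01.
have [t [t0 [m /andP[e0 e_lt]]]] := exists_multiple_near_integer irr d1.
move: e_lt; rewrite lt_min => /andP[e_d e1].
have e_itv : 0 < `|t%:R * a - m%:~R| < 1 by rewrite e0.
have [k [k0 [n kn]]] := multiples_approx_mod1_of_small c e_itv.
exists (k * t)%N; split; first by rewrite muln_gt0 k0.
exists (n + k%:Z * m); rewrite natrM intrD intrM pmulrn.
suff -> : k%:R * t%:R * a - c - (n%:~R + k%:R * m%:~R) = k%:R * (t%:R * a - m%:~R) - c - n%:~R.
  exact: lt_trans kn e_d.
by ring.
Qed.

Lemma multiples_approx_mod a p c d : 0 < p -> irrational (a / p) -> 0 < d ->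
  exists t : nat, (0 < t)%N /\ exists k : int, `|t%:R * a - c - k%:~R * p| < d.
Proof.
move=> p0 irr d0.
have [t [t0 [k tk]]] := multiples_approx_mod1 (c / p) irr (divr_gt0 d0 p0).
exists t; split=> //; exists k.
have -> : t%:R * a - c - k%:~R * p = p * (t%:R * (a / p) - c / p - k%:~R).
  by field; rewrite gt_eqF.
by rewrite normrM gtr0_norm // mulrC -ltr_pdivlMr.
Qed.

End kronecker.

(** * Plane rotations and stage costs *)

Section rotation.
Variable R : realType.
Implicit Types (th : R) (x y : 'cV[R]_2).

Lemma cV2_ext x y : x 0 0 = y 0 0 -> x 1 0 = y 1 0 -> x = y.
Proof.
move=> e0 e1; apply/matrixP => i j; rewrite (ord1 j).
case: i => -[|[|//]] Hi; [rewrite (_ : Ordinal Hi = 0) | rewrite (_ : Ordinal Hi = 1)] => //;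
  exact: val_inj.
Qed.

Lemma mulmx_cV2 (A : 'M[R]_2) x i : (A *m x) i 0 = A i 0 * x 0 0 + A i 1 * x 1 0.
Proof.
by rewrite mxE !big_ord_recl big_ord0 addr0; congr (_ + A i _ * x _ _); exact: val_inj.
Qed.

Lemma rot_mulmx0 th x : (rot th *m x) 0 0 = cos th * x 0 0 - sin th * x 1 0.
Proof. by rewrite mulmx_cV2 !mxE /=; ring. Qed.

Lemma rot_mulmx1 th x : (rot th *m x) 1 0 = sin th * x 0 0 + cos th * x 1 0.
Proof. by rewrite mulmx_cV2 !mxE /=; ring. Qed.

Lemma rot_mulmxA a b x : rot a *m (rot b *m x) = rot (a + b) *m x.
Proof. by apply: cV2_ext; rewrite !(rot_mulmx0, rot_mulmx1) cosD sinD; ring. Qed.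

Lemma rot_mulmxC a b x : rot a *m (rot b *m x) = rot b *m (rot a *m x).
Proof. by rewrite !rot_mulmxA addrC. Qed.

Lemma rot0_mulmx x : rot 0 *m x = x.
Proof. by apply: cV2_ext; rewrite !(rot_mulmx0, rot_mulmx1) cos0 sin0; ring. Qed.

Lemma rotDz th (k : int) : rot (th + k%:~R * (pi *+ 2)) = rot th.
Proof.
apply/matrixP => i j.
by rewrite !mxE mulrzl (periodicz (@cosD2pi R)) (periodicz (@sinD2pi R)).
Qed.

Lemma rotE th : rot th = cos th *: 1%:M + sin th *: rot (pi / 2).
Proof.
apply/matrixP => i j; rewrite !mxE cos_pihalf sin_pihalf.
by case: i j => -[|[|//]] ? [[|[|//]] ?] /=; ring.
Qed.

Lemma continuous_rot_mulmx x : continuous (fun th => rot th *m x).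
Proof.
have -> : (fun th => rot th *m x) = (fun th => cos th *: x + sin th *: (rot (pi / 2) *m x)).
  by apply/funext => th; rewrite rotE mulmxDl -!scalemxAl mul1mx.
by move=> th; apply: cvgD; apply: cvgZr_tmp; [exact: continuous_cos | exact: continuous_sin].
Qed.

Lemma exists_rot_diagonal y : exists psi, (rot psi *m y) 0 0 = (rot psi *m y) 1 0.
Proof.
under eq_exists do rewrite rot_mulmx0 rot_mulmx1.
have [ab|ab] := eqVneq (y 0 0 + y 1 0) 0.
  by exists (pi / 2); rewrite cos_pihalf sin_pihalf; lra.
pose u := (y 0 0 - y 1 0) / (y 0 0 + y 1 0).
have c0 : 0 < cos (atan u) by apply: cos_gt0_pihalf; rewrite atan_gtNpi2 atan_ltpi2.
have su : sin (atan u) = u * cos (atan u).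
  by have := atanK u; rewrite /tan => t; rewrite -[X in _ = X * _]t divfK // gt_eqF.
by exists (atan u); rewrite su /u; field.
Qed.

End rotation.

Section stage_costs.
Variable R : realType.
Implicit Types (th : R) (y w : 'cV[R]_2).

Definition sqnorm y := y 0 0 ^+ 2 + y 1 0 ^+ 2.
(* The cost of [y] after a quarter turn. *)
Definition swapped_cost y := 2 * y 0 0 ^+ 2 + y 1 0 ^+ 2.
Definition stage_cost (b : bool) y := if b then swapped_cost y else cost y.
Definition peak_cost y := Num.max (cost y) (swapped_cost y).

Definition diagonal y := y 0 0 ^+ 2 = y 1 0 ^+ 2.

Lemma sqnorm_ge0 y : 0 <= sqnorm y.
Proof. by rewrite addr_ge0 ?sqr_ge0. Qed.

Lemma sqnorm_rot th y : sqnorm (rot th *m y) = sqnorm y.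
Proof.
rewrite /sqnorm rot_mulmx0 rot_mulmx1.
transitivity ((cos th ^+ 2 + sin th ^+ 2) * sqnorm y); first by rewrite /sqnorm; ring.
by rewrite cos2Dsin2 mul1r.
Qed.

Lemma costZ a y : cost (a *: y) = a ^+ 2 * cost y.
Proof. by rewrite /cost !mxE; ring. Qed.

Lemma cost_parallelogram y w : cost (y + w) + cost (y - w) = 2 * cost y + 2 * cost w.
Proof. by rewrite /cost !mxE; ring. Qed.

Lemma swapped_cost_parallelogram y w :
  swapped_cost (y + w) + swapped_cost (y - w) = 2 * swapped_cost y + 2 * swapped_cost w.
Proof. by rewrite /swapped_cost !mxE; ring. Qed.

Lemma cost_ge0 y : 0 <= cost y.
Proof. by rewrite /cost; have := sqr_ge0 (y 0 0); have := sqr_ge0 (y 1 0); lra. Qed.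

Lemma swapped_cost_ge0 y : 0 <= swapped_cost y.
Proof. by rewrite /swapped_cost; have := sqr_ge0 (y 0 0); have := sqr_ge0 (y 1 0); lra. Qed.

Lemma stage_cost_rotBpihalf b th y :
  stage_cost b (rot (th - pi / 2) *m y) = stage_cost (~~ b) (rot th *m y).
Proof.
rewrite /stage_cost /cost /swapped_cost.
by rewrite !(rot_mulmx0, rot_mulmx1) cosBpihalf sinBpihalf; case: b => /=; ring.
Qed.

Lemma stage_cost_rotB_quarter_turns b th k y :
  stage_cost b (rot (th - k%:R * (pi / 2)) *m y) = stage_cost (b (+) odd k) (rot th *m y).
Proof.
elim: k b => [|k IHk] b; first by rewrite mul0r subr0 addbF.
have -> : th - k.+1%:R * (pi / 2) = th - k%:R * (pi / 2) - pi / 2 by rewrite -natr1; ring.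
by rewrite stage_cost_rotBpihalf IHk /= addNb addbN.
Qed.

Lemma stage_cost_le_peak b y : stage_cost b y <= peak_cost y.
Proof. by rewrite /peak_cost le_max; case: b; rewrite lexx ?orbT. Qed.

Lemma peak_costE y : peak_cost y = cost y \/ peak_cost y = swapped_cost y.
Proof. by rewrite /peak_cost /Num.max; case: ifP; auto. Qed.

Lemma peak_cost_le y : peak_cost y <= 2 * sqnorm y.
Proof.
rewrite /peak_cost ge_max /cost /swapped_cost /sqnorm.
have := sqr_ge0 (y 0 0); have := sqr_ge0 (y 1 0).
by move=> ? ?; apply/andP; split; lra.
Qed.

Lemma peak_cost_midpoint_convex y w : 2 * peak_cost y <= peak_cost (y + w) + peak_cost (y - w).
Proof.
have := stage_cost_le_peak false (y + w); have := stage_cost_le_peak true (y + w).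
have := stage_cost_le_peak false (y - w); have := stage_cost_le_peak true (y - w).
have := cost_parallelogram y w; have := swapped_cost_parallelogram y w.
have := cost_ge0 w; have := swapped_cost_ge0 w.
by case: (peak_costE y) => ->; rewrite /stage_cost; lra.
Qed.

Lemma peak_cost_kink y w : diagonal y ->
  2 * peak_cost y + 2 * `|y 0 0 * w 0 0 - y 1 0 * w 1 0| <= peak_cost (y + w) + peak_cost (y - w).
Proof.
(* Pair the cost at [y + w] with the swapped cost at [y - w], and vice versa. *)
rewrite /diagonal => diag.
have := stage_cost_le_peak false (y + w); have := stage_cost_le_peak true (y + w).
have := stage_cost_le_peak false (y - w); have := stage_cost_le_peak true (y - w).
have -> : peak_cost y = 3 * y 0 0 ^+ 2.
  rewrite /peak_cost /cost /swapped_cost -diag addrC maxxx; ring.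
rewrite /stage_cost /cost /swapped_cost !mxE.
have := sqr_ge0 (w 0 0); have := sqr_ge0 (w 1 0).
by case: (lerP 0 (y 0 0 * w 0 0 - y 1 0 * w 1 0)) => [/ger0_norm|/ltr0_norm] ->; nra.
Qed.

End stage_costs.

(** * The worst-case value function *)

Section worst_case_value.
Variables (R : realType) (alpha : R).
Local Notation rho := (1 / 100 : R).
Local Notation A := (Apair alpha).
Local Notation perp x := (rot (pi / 2) *m x).
Implicit Types (x w : 'cV[R]_2) (sigma : nat -> 'I_2).

Definition mode2_count sigma t := \sum_(s < t) (sigma s != 0 : nat).

Lemma traj_Apair sigma x t : traj A sigma x t =
  rho ^+ t *: (rot (t%:R * alpha - (mode2_count sigma t)%:R * (pi / 2)) *m x).
Proof.
elim: t => [|t IHt] /=.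
  by rewrite /mode2_count big_ord0 !mul0r subr0 rot0_mulmx expr0 scale1r.
rewrite IHt /mode2_count big_ord_recr /= -/(mode2_count sigma t) /Apair.
case: ifP => _; rewrite -scalemxAr -scalemxAl scalerA -exprSr rot_mulmxA;
  by congr (_ *: (rot _ *m x)); rewrite /= ?addn0 ?natrD -?natr1; ring.
Qed.

Lemma cost_traj_Apair sigma x t : cost (traj A sigma x t) =
  rho ^+ (2 * t) * stage_cost (odd (mode2_count sigma t)) (rot (t%:R * alpha) *m x).
Proof.
rewrite traj_Apair costZ -exprM mulnC.
by congr (_ * _); exact: (stage_cost_rotB_quarter_turns false).
Qed.

Definition value_term x t := rho ^+ (2 * t) *
  (if t is 0 then cost x else peak_cost (rot (t%:R * alpha) *m x)).

Lemma cost_traj_le_value_term sigma x t : cost (traj A sigma x t) <= value_term x t.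
Proof.
rewrite cost_traj_Apair /value_term; apply: ler_wpM2l; first exact: exprn_ge0.
case: t => [|t]; last exact: stage_cost_le_peak.
by rewrite /mode2_count big_ord0 mul0r rot0_mulmx.
Qed.

Definition best_parity x t := (0 < t)%N &&
  (cost (rot (t%:R * alpha) *m x) < swapped_cost (rot (t%:R * alpha) *m x)).

Definition best_switching x t : 'I_2 :=
  if best_parity x t.+1 != best_parity x t then 1 else 0.

Lemma odd_mode2_count_best x t : odd (mode2_count (best_switching x) t) = best_parity x t.
Proof.
elim: t => [|t IHt]; first by rewrite /mode2_count big_ord0.
rewrite /mode2_count big_ord_recr /= -/(mode2_count _ t) oddD IHt /best_switching.
by case: (best_parity x t.+1); case: (best_parity x t).
Qed.

Lemma cost_traj_best x t : cost (traj A (best_switching x) x t) = value_term x t.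
Proof.
rewrite cost_traj_Apair odd_mode2_count_best /value_term /best_parity.
by case: t => [|t] /=; [rewrite mul0r rot0_mulmx | rewrite /peak_cost /Num.max; case: ifP].
Qed.

Lemma value_term_ge0 x t : 0 <= value_term x t.
Proof. by rewrite -cost_traj_best cost_ge0. Qed.

Lemma value_term_le_geometric x t : value_term x t <= geometric (2 * sqnorm x) (rho ^+ 2) t.
Proof.
rewrite /value_term /= [leRHS]mulrC -exprM; apply: ler_wpM2l; first exact: exprn_ge0.
case: t => [|t]; first exact: le_trans (stage_cost_le_peak false x) (peak_cost_le x).
by rewrite -(sqnorm_rot (t.+1%:R * alpha)) peak_cost_le.
Qed.

Lemma is_cvg_value_series x : cvgn (series (value_term x)).
Proof.
apply: (series_le_cvg (v_ := geometric (2 * sqnorm x) (rho ^+ 2))).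
- exact: value_term_ge0.
- by move=> n; apply: geometric_ge0; rewrite ?sqr_ge0 // mulr_ge0 ?sqnorm_ge0.
- exact: value_term_le_geometric.
- by apply: is_cvg_geometric_series; rewrite ger0_norm ?sqr_ge0 //; lra.
Qed.

Definition worst_value x := limn (series (value_term x)).

Lemma Jworst_Apair x : Jworst A (@cost R) x = worst_value x.
Proof.
have le_worst sigma : limn (series (@cost R \o traj A sigma x)) <= worst_value x.
  have le_series := cost_traj_le_value_term sigma x.
  have cvg_sigma : cvgn (series (@cost R \o traj A sigma x)).
    apply: (series_le_cvg (v_ := value_term x)) => //; last exact: is_cvg_value_series.
      by move=> n; exact: cost_ge0.
    exact: value_term_ge0.
  apply: ler_lim cvg_sigma _ _; first exact: is_cvg_value_series.
  by apply: nearW => n; apply: ler_sum => t _; exact: le_series.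
have attained : limn (series (@cost R \o traj A (best_switching x) x)) = worst_value x.
  by congr (limn _); apply/funext => n; apply: eq_bigr => t _; exact: cost_traj_best.
rewrite /Jworst; set E := [set v | _].
have Ew : E (worst_value x) by exists (best_switching x); rewrite attained.
have ubw : ubound E (worst_value x) by move=> _ [sigma ->]; exact: le_worst.
apply/eqP; rewrite eq_le ge_sup //=; last by exists (worst_value x).
by apply: sup_upper_bound => //; split; exists (worst_value x).
Qed.

Lemma value_term_midpoint_convex x w t :
  2 * value_term x t <= value_term (x + w) t + value_term (x - w) t.
Proof.
rewrite /value_term mulrCA -mulrDr; apply: ler_wpM2l; first exact: exprn_ge0.
case: t => [|t]; last by rewrite mulmxDr mulmxBr peak_cost_midpoint_convex.
by rewrite cost_parallelogram lerDl mulr_ge0 ?cost_ge0.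
Qed.

Definition kink_slope x t := rho ^+ (2 * t) *
  (4 * `|(rot (t%:R * alpha) *m x) 0 0 * (rot (t%:R * alpha) *m x) 1 0|).

Lemma value_term_kink x h t : (0 < t)%N -> diagonal (rot (t%:R * alpha) *m x) ->
  kink_slope x t * `|h| + 2 * value_term x t <=
  value_term (x + h *: perp x) t + value_term (x - h *: perp x) t.
Proof.
case: t => [//|t] _; rewrite /value_term /kink_slope.
rewrite mulmxDr mulmxBr -!scalemxAr rot_mulmxC.
move: (rot _ *m x) => y diag; set r := rho ^+ _.
have -> : r * (4 * `|y 0 0 * y 1 0|) * `|h| + 2 * (r * peak_cost y) =
          r * (4 * `|y 0 0 * y 1 0| * `|h| + 2 * peak_cost y) by ring.
rewrite -mulrDr; apply: ler_wpM2l; first exact: exprn_ge0.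
apply: le_trans (peak_cost_kink _ diag); rewrite addrC lerD2l.
have u0 : (perp y) 0 0 = - y 1 0 by rewrite rot_mulmx0 cos_pihalf sin_pihalf; ring.
have u1 : (perp y) 1 0 = y 0 0 by rewrite rot_mulmx1 cos_pihalf sin_pihalf; ring.
move: (perp y) u0 u1 => u u0 u1; rewrite !mxE u0 u1.
have -> : y 0 0 * (h * - y 1 0) - y 1 0 * (h * y 0 0) = - 2 * h * (y 0 0 * y 1 0) by ring.
by rewrite !normrM normrN [`|2|]ger0_norm //; lra.
Qed.

Lemma worst_value_kink x h t : (0 < t)%N -> diagonal (rot (t%:R * alpha) *m x) ->
  kink_slope x t * `|h| <=
  worst_value (x + h *: perp x) + worst_value (x - h *: perp x) - 2 * worst_value x.
Proof.
move=> t0 diag.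
set D := fun s => value_term (x + h *: perp x) s + value_term (x - h *: perp x) s
                  - 2 * value_term x s.
have D_ge0 s : 0 <= D s by rewrite subr_ge0 value_term_midpoint_convex.
have cvgD : series D @ \oo -->
    worst_value (x + h *: perp x) + worst_value (x - h *: perp x) - 2 * worst_value x.
  have -> : series D = (fun n => series (value_term (x + h *: perp x)) n +
      series (value_term (x - h *: perp x)) n - 2 * series (value_term x) n).
    by apply/funext => n; rewrite /series /= sumrB big_split mulr_sumr.
  by apply: cvgB; [apply: cvgD | apply: cvgMl_tmp]; exact: is_cvg_value_series.
rewrite -(cvg_lim _ cvgD) //; apply: le_trans (series_ge_term t D_ge0 (cvgP _ cvgD)).
by rewrite /D lerBrDr value_term_kink.
Qed.

Lemma kink_slope_gt0 x t : x != 0 -> diagonal (rot (t%:R * alpha) *m x) -> 0 < kink_slope x t.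
Proof.
set y := rot _ *m x => x0 diag.
have y_neq0 : y != 0.
  apply: contraNneq x0 => y0.
  by rewrite -(rot0_mulmx x) -(addNr (t%:R * alpha)) -rot_mulmxA -/y y0 mulmx0.
have y00 : y 0 0 != 0.
  apply: contraNneq y_neq0 => y0; apply/eqP/cV2_ext; rewrite [RHS]mxE ?y0 //.
  by apply/eqP; rewrite -sqrf_eq0 -diag y0 expr0n.
have y10 : y 1 0 != 0 by apply: contra y00; rewrite -sqrf_eq0 -diag sqrf_eq0.
by rewrite /kink_slope mulr_gt0 ?exprn_gt0 // mulr_gt0 // normr_gt0 mulf_neq0.
Qed.

Lemma not_differentiable_worst_value x t : (0 < t)%N -> x != 0 ->
  diagonal (rot (t%:R * alpha) *m x) -> ~ differentiable worst_value x.
Proof.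
move=> t0 x0 diag.
apply: (not_differentiable_of_kink (v := perp x) (kink_slope_gt0 x0 diag)) => h.
exact: worst_value_kink.
Qed.

End worst_case_value.

Lemma dense_rot_diagonal (R : realType) (alpha : R) : irrational (alpha / (pi *+ 2)) ->
  dense [set x : 'cV[R]_2 | exists2 t, (0 < t)%N & diagonal (rot (t%:R * alpha) *m x)].
Proof.
move=> irr U [y Uy] oU.
have [d d0 dU] : exists2 d : R, 0 < d & forall th, `|th| < d -> U (rot th *m y).
  have : nbhs (rot 0 *m y) U by rewrite rot0_mulmx; exact: open_nbhs_nbhs.
  move=> /(@continuous_rot_mulmx _ y 0) /nbhs_ballP [d d0 dU].
  by exists d => // th th_d; apply: dU; rewrite /ball /= sub0r normrN.
have [psi diag_psi] := exists_rot_diagonal y.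
have pi2_gt0 : 0 < pi *+ 2 :> R by rewrite mulrn_wgt0 ?pi_gt0.
have [t [t0 [k tk]]] := multiples_approx_mod psi pi2_gt0 irr d0.
pose th := psi + k%:~R * (pi *+ 2) - t%:R * alpha.
exists (rot th *m y); split.
  apply: dU; rewrite -normrN (_ : - th = t%:R * alpha - psi - k%:~R * (pi *+ 2)) //.
  by rewrite /th; ring.
exists t => //; rewrite rot_mulmxA (_ : _ + th = psi + k%:~R * (pi *+ 2)) ?rotDz.
  by rewrite /diagonal diag_psi.
by rewrite /th; ring.
Qed.

Theorem corollary4 (R : realType) (alpha : R) :
  pi / 8 < alpha < 3 * pi / 8 ->
  ~ (exists q : rat, alpha / pi = ratr q) ->
  dense [set x : 'cV[R]_2 | ~ differentiable (Jworst (Apair alpha) (@cost R)) x].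
Proof.
move=> _ not_rat.
have irr : irrational (alpha / (pi *+ 2)).
  move=> [q _ q_eq]; apply: not_rat; exists (q * 2%:R).
  by rewrite rmorphM /= ratr_nat q_eq -[pi *+ 2]mulr_natr invfM mulrA divfK ?pnatr_eq0.
have -> : Jworst (Apair alpha) (@cost R) = worst_value alpha.
  by apply/funext => x; exact: Jworst_Apair.
have e0 : const_mx 1 != 0 :> 'cV[R]_2.
  by apply/eqP => /matrixP /(_ 0 0); rewrite !mxE; exact/eqP/oner_neq0.
apply: dense_subset (denseI (open_set1C 0) (dense_set1C_normed 0 e0) (dense_rot_diagonal irr)).
by move=> x [/eqP x0 [t t0 diag]]; exact: not_differentiable_worst_value t0 x0 diag.
Qed.
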